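(* The map $\mathcal K'(\mathbb C^n)\to\mathcal K'(\mathbb C^n)$, $K\mapsto\widehat K$, is measurable.
   Context: $\mathcal K'(\mathbb C^n)$ is the space of non-empty compact subsets of $\mathbb C^n$ with the Hausdorff distance and its Borel $\sigma$-algebra. $\widehat K=\{z\in\mathbb C^n:|p(z)|\le\max_{x\in K}|p(x)| \text{ for all polynomials } p\}$ is the polynomially convex hull. *)

From HB Require Import structures.
From mathcomp Require Import all_boot all_order all_algebra.
From mathcomp Require Import all_classical all_reals all_analysis.
From mathcomp Require Import complex.
From mathcomp Require mpoly.
Import numFieldTopology.Exports numFieldNormedType.Exports.
Import Order.TTheory GRing.Theory Num.Theory.

Set Implicit Arguments.
Unset Strict Implicit.
Unset Printing Implicit Defensive.

Local Open Scope ring_scope.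
Local Open Scope classical_set_scope.

(* The complex numbers R[i] (R a real closed archimedean complete field,
   i.e. a model of the reals) with their usual metric topology (the one
   induced by the complex modulus), as for any numClosedFieldType. *)
HB.instance Definition _ (R : realType) :=
  PseudoPointedMetric.copy R[i] (R[i])^o.

Section Defs.
Variables (R : realType) (n : nat).

(* C^n, as row vectors of length n (product topology = Euclidean topology). *)
Definition Cn := 'rV[R[i]]_n.

Definition cmod (z : R[i]) : R := ComplexField.Normc.normc z.

Definition edist (z w : Cn) : R :=
  Num.sqrt (\sum_(i < n) cmod (z ord0 i - w ord0 i) ^+ 2).

Definition Kprime := {K : set Cn | compact K /\ K !=set0}.

Definition setdist (z : Cn) (B : set Cn) : R := inf [set edist z b | b in B].

Definition hausdorff (A B : set Cn) : R :=
  Num.max (sup [set setdist a B | a in A]) (sup [set setdist b A | b in B]).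

Definition hdist (K L : Kprime) : R := hausdorff (proj1_sig K) (proj1_sig L).

Definition hopen (U : set Kprime) : Prop :=
  forall K, U K -> exists2 e : R, 0 < e & forall L, hdist K L < e -> U L.

Definition hborel (B : set Kprime) : Prop := <<s [set U | hopen U] >> B.

Definition cpoly := mpoly.mpoly n R[i].
Definition peval (p : cpoly) (z : Cn) : R[i] := mpoly.meval (fun i => z ord0 i) p.

(* max_{x in K} |p(x)| (a sup, attained for K compact non-empty) *)
Definition pmax (p : cpoly) (K : set Cn) : R := sup [set cmod (peval p x) | x in K].

Definition pchull (K : set Cn) : set Cn :=
  [set z | forall p : cpoly, cmod (peval p z) <= pmax p K].

End Defs.

(** The hull map is upper semicontinuous for the Hausdorff distance: a point
    outside a neighbourhood V of hull(K) is excluded from hull(L), for all L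
    Hausdorff-close to K, by a single polynomial that is large there, and by
    compactness finitely many polynomials suffice.  Hence {K | hull(K) ⊆ V} is
    open for V open, and {K | hull(K) ⊆ F} is a countable intersection of such
    sets for F = {h >= c} with h continuous.  Every Hausdorff-open set U is the
    union of the countably many sets {L | L and D are s-close} ⊆ U with D a
    finite set of points with rational coordinates and s rational, and the
    hull-preimage of such a set is a finite Boolean combination of sets of the
    two previous kinds.  So hull-preimages of open sets, hence of Borel sets,
    are Borel. *)

From Pilot Require Import Defs.
From HB Require Import structures.
From mathcomp Require Import all_boot all_order all_algebra.
From mathcomp Require Import all_classical all_reals all_analysis.
From mathcomp Require Import complex.
From mathcomp Require mpoly.
From mathcomp Require Import lra.
Import numFieldTopology.Exports numFieldNormedType.Exports.
Import Order.TTheory GRing.Theory Num.Theory.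
Local Open Scope ring_scope.
Local Open Scope classical_set_scope.
Local Open Scope complex_scope.

Section complex_modulus.
Context {R : realType}.
Implicit Types (a b c : R[i]) (x y r : R).

Lemma cmod_ge0 a : 0 <= cmod a.
Proof. by case: a => x y; exact: sqrtr_ge0. Qed.

Lemma cmodD a b : cmod (a + b) <= cmod a + cmod b.
Proof. exact: le_normcD. Qed.

Lemma cmodB a b : cmod (a - b) = cmod (b - a).
Proof. by rewrite -opprB; exact: normcN. Qed.

Lemma cmod_dist_dist a b : `|cmod a - cmod b| <= cmod (a - b).
Proof.
have := cmodD (a - b) b; have := cmodD (b - a) a.
rewrite !subrK cmodB ler_norml; move=> *; apply/andP; split; lra.
Qed.

Lemma ballC a b r : ball a r%:C b <-> cmod (a - b) < r.
Proof. by rewrite /ball /= ltcR. Qed.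

Lemma cmod_continuous : continuous (@cmod R).
Proof.
move=> a; apply/(@cvgrPdist_lt _ _ _ (nbhs a) (nbhs_filter a)) => e e0.
apply/nbhs_ballP; exists e%:C; first by rewrite /= ltcR.
by move=> b /ballC; apply: le_lt_trans (cmod_dist_dist _ _).
Qed.

Lemma cmod_le_Re_Im x y : cmod (x +i* y) <= `|x| + `|y|.
Proof.
rewrite -(ger0_norm (addr_ge0 (normr_ge0 x) (normr_ge0 y))) -sqrtr_sqr ler_sqrt //.
have := mulr_ge0 (normr_ge0 x) (normr_ge0 y).
rewrite sqrrD !real_normK ?num_real //; lra.
Qed.

Lemma Re_le_cmod c : `|complex.Re c| <= cmod c.
Proof.
case: c => x y; rewrite -sqrtr_sqr ler_sqrt ?addr_ge0 ?sqr_ge0 //=.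
by rewrite lerDl sqr_ge0.
Qed.

Lemma Im_le_cmod c : `|complex.Im c| <= cmod c.
Proof.
case: c => x y; rewrite -sqrtr_sqr ler_sqrt ?addr_ge0 ?sqr_ge0 //=.
by rewrite lerDr sqr_ge0.
Qed.

Lemma gtc0_realE c : 0 < c -> c = (complex.Re c)%:C /\ 0 < complex.Re c.
Proof. by case: c => x y; rewrite ltcE /= => /andP[/eqP-> ->]. Qed.

Lemma nbhsCP a (P : set R[i]) :
  nbhs a P <-> exists2 r, 0 < r & forall b, cmod (a - b) < r -> P b.
Proof.
split => [/nbhs_ballP[r /gtc0_realE[rE r0] aP]|[r r0 aP]].
  by exists (complex.Re r) => // b /ballC; rewrite -rE => /aP.
by apply/nbhs_ballP; exists r%:C; rewrite /= ?ltcR // => b /ballC /aP.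
Qed.

Lemma complex_continuous : continuous (fun xy : R * R => xy.1 +i* xy.2).
Proof.
move=> [x y] P /nbhsCP[e e0 eP]; apply/nbhs_ballP.
exists (e / 2); first by rewrite /= divr_gt0.
move=> [x' y'] [/= hx hy]; rewrite /ball /= in hx hy; apply: eP.
apply: le_lt_trans (cmod_le_Re_Im (x - x') (y - y')) _; lra.
Qed.

Lemma compact_cmod_le r : compact [set c : R[i] | cmod c <= r].
Proof.
have square : compact (`[- r, r] `*` `[- r, r]).
  by apply: compact_setX; exact: segment_compact.
apply: (subclosed_compact _ (continuous_compact
  (continuous_subspaceT complex_continuous) square)).
  exact: (preimage_closed (fun c _ => cmod_continuous c) (@closed_le _ r)).
move=> [x y] /= xyr; exists (x, y) => //; split; rewrite /= in_itv /= -ler_norml.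
- exact: le_trans (Re_le_cmod (x +i* y)) xyr.
- exact: le_trans (Im_le_cmod (x +i* y)) xyr.
Qed.

End complex_modulus.

Section max_distance.
Context {R : realType} {n : nat}.
Local Notation Cn := (Cn R n).
Implicit Types (z w u : Cn) (e : R).

Definition maxdist z w : R := \big[Num.max/0]_(i < n) cmod (z ord0 i - w ord0 i).

Lemma maxdist_leP z w e :
  0 <= e -> maxdist z w <= e <-> forall i, cmod (z ord0 i - w ord0 i) <= e.
Proof.
move=> e0; split => [/bigmax_leP[_ zwe] i|zwe]; first exact: zwe.
by apply/bigmax_leP; split=> // i _; exact: zwe.
Qed.

Lemma maxdist_ltP z w e :
  0 < e -> maxdist z w < e <-> forall i, cmod (z ord0 i - w ord0 i) < e.
Proof.
move=> e0; split => [/bigmax_ltP[_ zwe] i|zwe]; first exact: zwe.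
by apply/bigmax_ltP; split=> // i _; exact: zwe.
Qed.

Lemma maxdist_ge0 z w : 0 <= maxdist z w.
Proof. by apply: bigmax_ge_id. Qed.

Lemma cmod_le_maxdist z w i : cmod (z ord0 i - w ord0 i) <= maxdist z w.
Proof. exact: le_bigmax. Qed.

Lemma maxdistC z w : maxdist z w = maxdist w z.
Proof. by apply: eq_bigr => i _; rewrite cmodB. Qed.

Lemma maxdistxx z : maxdist z z = 0.
Proof.
apply/le_anti; rewrite maxdist_ge0 andbT.
by apply/maxdist_leP => // i; rewrite subrr /cmod ComplexField.Normc.normc0.
Qed.

Lemma maxdist_triangle z w u : maxdist z u <= maxdist z w + maxdist w u.
Proof.
apply/maxdist_leP => [|i]; first by rewrite addr_ge0 ?maxdist_ge0.
rewrite -[z ord0 i](subrK (w ord0 i)) -addrA.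
have := cmodD (z ord0 i - w ord0 i) (w ord0 i - u ord0 i).
have := cmod_le_maxdist z w i; have := cmod_le_maxdist w u i; lra.
Qed.

Lemma ball_maxdist z w e : ball z e%:C w <-> maxdist z w < e.
Proof.
rewrite /ball /=; split => [[e0 zwe]|zwe].
  by apply/maxdist_ltP => [|i]; [rewrite -ltcR | apply/ballC; exact: zwe].
have e0 : 0 < e by apply: le_lt_trans zwe; exact: maxdist_ge0.
split; first by rewrite ltcR.
by move=> i j; rewrite (ord1 i); apply/ballC; move/maxdist_ltP: zwe; apply.
Qed.

Lemma nbhs_maxdistP z (P : set Cn) :
  nbhs z P <-> exists2 e, 0 < e & forall w, maxdist z w < e -> P w.
Proof.
split => [/nbhs_ballP[r /gtc0_realE[rE r0] zP]|[e e0 zP]].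
  by exists (complex.Re r) => // w /ball_maxdist; rewrite -rE => /zP.
by apply/nbhs_ballP; exists e%:C; rewrite /= ?ltcR // => w /ball_maxdist /zP.
Qed.

Lemma maxdist_continuous u : continuous (maxdist ^~ u).
Proof.
move=> z; apply/(@cvgrPdist_lt _ _ _ (nbhs z) (nbhs_filter z)) => e e0.
apply/nbhs_maxdistP; exists e => // w zwe; rewrite ltr_norml.
have := maxdist_triangle z w u; have := maxdist_triangle w z u.
rewrite (maxdistC w z) => ? ?; apply/andP; split; lra.
Qed.

Lemma open_maxdist_lt u e : open [set w | maxdist w u < e].
Proof. exact: (open_comp (fun w _ => maxdist_continuous u w) (@open_lt _ e)). Qed.

Lemma maxdist_le_edist z w : maxdist z w <= Defs.edist z w.
Proof.
apply/maxdist_leP => [|i]; first exact: sqrtr_ge0.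
rewrite -(ger0_norm (cmod_ge0 _)) -sqrtr_sqr ler_sqrt ?sumr_ge0 // => [|j _].
  by rewrite (bigD1 i) //= lerDl sumr_ge0 // => j _; exact: sqr_ge0.
exact: sqr_ge0.
Qed.

Lemma edist_le_maxdist z w : Defs.edist z w <= n%:R * maxdist z w.
Proof.
have d0 := maxdist_ge0 z w.
rewrite -(ger0_norm (mulr_ge0 (ler0n _ n) d0)) -sqrtr_sqr ler_sqrt ?sqr_ge0 //.
apply: (@le_trans _ _ (\sum_(i < n) maxdist z w ^+ 2)).
  by apply: ler_sum => i _; rewrite lerXn2r ?nnegrE ?cmod_ge0 ?cmod_le_maxdist.
rewrite sumr_const card_ord -[_ *+ n]mulr_natl exprMn ler_wpM2r ?sqr_ge0 //.
by case: n => [|m]; rewrite ?expr0n // -natrX ler_nat expnS leq_pmulr.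
Qed.

End max_distance.

Lemma continuous_compact_ub {R : realType} {T : topologicalType}
    {g : T -> R} {A : set T} :
  continuous g -> compact A -> exists M, forall x, A x -> g x <= M.
Proof.
move=> gc /(continuous_compact (continuous_subspaceT gc))/compact_bounded[M [_ gM]].
exists (M + 1) => x Ax; apply: le_trans (ler_norm _) _.
by apply: (gM (M + 1)); [rewrite ltrDl | exists x].
Qed.

Section big_continuity.
Context {K : numFieldType} {T : topologicalType}.

Lemma continuous_sumr (I : Type) (s : seq I) (f : I -> T -> K) :
  (forall i, continuous (f i)) -> continuous (fun z => \sum_(i <- s) f i z).
Proof.
move=> fc; elim: s => [|a s IH].
  by under eq_fun do rewrite big_nil; exact: cst_continuous.
under eq_fun do rewrite big_cons.
by move=> z; exact: (@continuousD K K^o _ _ _ z (fc a z) (IH z)).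
Qed.

Lemma continuous_prodr (I : Type) (s : seq I) (f : I -> T -> K) :
  (forall i, continuous (f i)) -> continuous (fun z => \prod_(i <- s) f i z).
Proof.
move=> fc; elim: s => [|a s IH].
  by under eq_fun do rewrite big_nil; exact: cst_continuous.
under eq_fun do rewrite big_cons.
by move=> z; exact: (@continuousM K _ _ _ z (fc a z) (IH z)).
Qed.

Lemma continuous_exprn (f : T -> K) k :
  continuous f -> continuous (fun z => f z ^+ k).
Proof.
move=> fc; elim: k => [|k IH].
  by under eq_fun do rewrite expr0; exact: cst_continuous.
under eq_fun do rewrite exprS.
by move=> z; exact: (@continuousM K _ _ _ z (fc z) (IH z)).
Qed.

End big_continuity.

Section polynomial_hull.
Context {R : realType} {n : nat}.
Local Notation Cn := (Cn R n).
Implicit Types (K : set Cn) (p : cpoly R n) (r : R).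

Lemma peval_continuous p : continuous (peval p).
Proof.
rewrite /peval; under eq_fun do rewrite mpoly.mevalE.
apply: continuous_sumr => m z.
have cst : {for z, continuous (fun=> mpoly.mcoeff m p)}.
  by move=> ?; exact: cst_continuous.
apply: (@continuousM R[i] _ (fun=> mpoly.mcoeff m p) _ z cst).
apply: continuous_prodr => i; apply: continuous_exprn; exact: coord_continuous.
Qed.

Lemma cmod_peval_continuous p : continuous (fun z => cmod (peval p z)).
Proof.
by move=> z; apply: continuous_comp; [exact: peval_continuous|exact: cmod_continuous].
Qed.

Definition polydisc r : set Cn := [set z | forall i, cmod (z ord0 i) <= r].

Lemma compact_polydisc r : compact (polydisc r).
Proof. exact: (rV_compact (fun=> compact_cmod_le r)). Qed.

Lemma maxdist_le_polydisc r : [set z | maxdist z 0 <= r] `<=` polydisc r.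
Proof.
move=> z /= zr i; apply: le_trans zr.
by have := cmod_le_maxdist z 0 i; rewrite mxE subr0.
Qed.

Lemma pmax_ge {K} p {x} : compact K -> K x -> cmod (peval p x) <= pmax p K.
Proof.
move=> /(continuous_compact_ub (cmod_peval_continuous p))[M KM] Kx.
by apply: ub_le_sup; [exists M => _ [y Ky <-]; exact: KM | exists x].
Qed.

Lemma pmax_le K p c :
  K !=set0 -> (forall x, K x -> cmod (peval p x) <= c) -> pmax p K <= c.
Proof.
move=> [x Kx] Kc; apply: ge_sup; first by exists (cmod (peval p x)), x.
by move=> _ [y Ky <-]; exact: Kc.
Qed.

Lemma subset_pchull K : compact K -> K `<=` pchull K.
Proof. by move=> Kc x Kx p; exact: pmax_ge. Qed.

Lemma pchull_neq0 {K} : compact K -> K !=set0 -> pchull K !=set0.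
Proof. by move=> Kc [x Kx]; exists x; exact: subset_pchull. Qed.

Lemma closed_pchull K : closed (pchull K).
Proof.
have -> : pchull K =
    \bigcap_p (fun z => cmod (peval p z)) @^-1` [set x | x <= pmax p K].
  by apply/seteqP; split => [z zK p _|z zK p]; exact: zK.
apply: closed_bigI => p _.
exact: (preimage_closed (fun z _ => cmod_peval_continuous p z) (@closed_le _ _)).
Qed.

Lemma peval_coord (i : 'I_n) (z : Cn) :
  peval (mpoly.mpolyX R[i] (mpoly.mnm1 i)) z = z ord0 i.
Proof. exact: mpoly.mevalXU. Qed.

Lemma pchull_subset_polydisc {K r} :
  K !=set0 -> K `<=` polydisc r -> pchull K `<=` polydisc r.
Proof.
move=> K0 Kr z zK i; have := zK (mpoly.mpolyX R[i] (mpoly.mnm1 i)).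
rewrite peval_coord => /le_trans; apply; apply: pmax_le => // x Kx.
by rewrite peval_coord; exact: Kr.
Qed.

Lemma compact_pchull {K} : compact K -> K !=set0 -> compact (pchull K).
Proof.
move=> Kc K0; have [r Kr] := continuous_compact_ub (maxdist_continuous 0) Kc.
exact: subclosed_compact (closed_pchull K) (compact_polydisc r)
  (pchull_subset_polydisc K0 (subset_trans Kr (maxdist_le_polydisc r))).
Qed.

End polynomial_hull.

Section hausdorff_distance.
Context {R : realType} {n : nat}.
Local Notation Cn := (Cn R n).
Implicit Types (A B : set Cn) (z : Cn).

Lemma setdist_le {z B b} : B b -> setdist z B <= Defs.edist z b.
Proof.
move=> Bb; apply: ge_inf; last by exists b.
by exists 0 => _ [y _ <-]; exact: sqrtr_ge0.
Qed.

Lemma hausdorff_le A B t : A !=set0 -> B !=set0 ->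
    (forall a, A a -> exists2 b, B b & Defs.edist a b <= t) ->
    (forall b, B b -> exists2 a, A a & Defs.edist b a <= t) ->
  hausdorff A B <= t.
Proof.
move=> [a0 Aa0] [b0 Bb0] AB BA; rewrite ge_max; apply/andP; split.
  apply: ge_sup; first by exists (setdist a0 B), a0.
  by move=> _ [a /AB[b Bb ab] <-]; exact: le_trans (setdist_le Bb) ab.
apply: ge_sup; first by exists (setdist b0 A), b0.
by move=> _ [b /BA[a Aa ba] <-]; exact: le_trans (setdist_le Aa) ba.
Qed.

Lemma has_ubound_setdist A B : compact A -> B !=set0 ->
  has_ubound [set setdist a B | a in A].
Proof.
move=> Ac [b0 Bb0].
have [M AM] := continuous_compact_ub (maxdist_continuous b0) Ac.
exists (n%:R * M) => _ [a Aa <-]; apply: le_trans (setdist_le Bb0) _.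
by apply: le_trans (edist_le_maxdist _ _) _; rewrite ler_wpM2l ?AM.
Qed.

End hausdorff_distance.

Section hausdorff_neighbourhoods.
Context {R : realType} {n : nat}.
Local Notation Cn := (Cn R n).
Local Notation Kprime := (Kprime R n).
Implicit Types (K L : Kprime) (V : set Cn) (p : cpoly R n).

Lemma hdist_lt_approx K L t : hdist K L < t ->
  forall l, sval L l -> exists2 k, sval K k & Defs.edist l k < t.
Proof.
have [[_ K0] [Lc _]] := (svalP K, svalP L).
move=> KLt l Ll; have lt : setdist l (sval K) < t.
  apply: le_lt_trans KLt; rewrite le_max; apply/orP; right.
  by apply: ub_le_sup; [exact: has_ubound_setdist | exists l].
by have [_ [k Kk <-] lk] := inf_lt (image_nonempty _ K0) lt; exists k.
Qed.

Definition hnbhs K : set_system Kprime :=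
  filter_from [set e | 0 < e] (fun e => [set L | hdist K L < e]).

Global Instance hnbhs_filter K : Filter (hnbhs K).
Proof.
apply: filter_from_filter; first by exists 1%R; rewrite /= ltr01.
move=> e1 e2 e10 e20; exists (Num.min e1 e2); first by rewrite /= lt_min e10.
by move=> L /= KL; split; apply: lt_le_trans KL _; rewrite ge_min lexx ?orbT.
Qed.

Lemma hnbhs_subset_open K V : open V -> sval K `<=` V ->
  \forall L \near hnbhs K, sval L `<=` V.
Proof.
move=> Vo KV; have /compact_near_coveringP cover := proj1 (svalP K).
(* a Lebesgue number of the cover of [K] by [V] *)
have : \forall d \near 0^'+, sval K `<=` [set k | forall w, maxdist k w < d -> V w].
  apply: cover => k /KV Vk.
  have /nbhs_maxdistP[e e0 kV] : nbhs k V by apply: open_nbhs_nbhs; split.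
  exists ([set k' | maxdist k k' < e / 2], [set d | d < e / 2]) => /=.
    split; last exact: nbhs_right_lt (divr_gt0 e0 _).
    by apply/nbhs_maxdistP; exists (e / 2) => //; rewrite divr_gt0.
  move=> [k' d] [/= kk' de] w k'w; apply: kV.
  by apply: le_lt_trans (maxdist_triangle _ k' _) _; lra.
move=> Kd; have [d [/= d0 dV]] := filter_ex (filterI (nbhs_right_gt 0) Kd).
exists d => // L /hdist_lt_approx Ld l /Ld[k Kk lk]; apply: (dV k Kk).
by rewrite maxdistC; exact: le_lt_trans (maxdist_le_edist _ _) lk.
Qed.

Lemma pmax_lt_hnbhs K p c : pmax p (sval K) < c ->
  \forall L \near hnbhs K, pmax p (sval L) < c.
Proof.
have [Kc _] := svalP K; move=> Kp; pose m := (pmax p (sval K) + c) / 2.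
have Vo : open [set z | cmod (peval p z) < m].
  exact: (open_comp (fun z _ => cmod_peval_continuous p z) (@open_lt _ m)).
have KV : sval K `<=` [set z | cmod (peval p z) < m].
  by move=> z Kz; apply: le_lt_trans (pmax_ge p Kc Kz) _; rewrite /m; lra.
near=> L; have LV : sval L `<=` [set z | cmod (peval p z) < m].
  by near: L; exact: hnbhs_subset_open.
apply: le_lt_trans (_ : m < c); last by rewrite /m; lra.
by apply: pmax_le => [|z /LV /ltW //]; exact: (proj2 (svalP L)).
Unshelve. all: by end_near.
Qed.

End hausdorff_neighbourhoods.

Section hull_semicontinuity.
Context {R : realType} {n : nat}.
Local Notation Cn := (Cn R n).
Local Notation Kprime := (Kprime R n).
Implicit Types (K L : Kprime) (V : set Cn).

Definition hull_map K : Kprime :=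
  let: conj Kc K0 := svalP K in
  exist _ (pchull (sval K)) (conj (compact_pchull Kc K0) (pchull_neq0 Kc K0)).

Lemma hull_mapE K : sval (hull_map K) = pchull (sval K).
Proof. by rewrite /hull_map; case: (svalP K). Qed.

Lemma pchull_upper_semicontinuous K V : open V -> pchull (sval K) `<=` V ->
  \forall L \near hnbhs K, pchull (sval L) `<=` V.
Proof.
have [Kc K0] := svalP K; move=> Vo KV.
have [r Kr] := continuous_compact_ub (maxdist_continuous 0) Kc.
pose D := polydisc (r + 1) `&` ~` V.
have /compact_near_coveringP cover : compact D.
  exact: compact_closedI (compact_polydisc _) (open_closedC Vo).
(* a polynomial witnessing [w \notin pchull K] excludes, uniformly for L near K,
   a neighbourhood of [w] from [pchull L] *)
have LD : \forall L \near hnbhs K, D `<=` ~` pchull (sval L).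
  apply: cover => w [_ Vw].
  have /existsNP[p /negP] : ~ pchull (sval K) w by move=> /KV.
  rewrite -ltNge => pw; pose c := (pmax p (sval K) + cmod (peval p w)) / 2.
  exists ([set w' | c < cmod (peval p w')], [set L | pmax p (sval L) < c]).
    split; last by apply: pmax_lt_hnbhs; rewrite /c; lra.
    apply: open_nbhs_nbhs; split; last by rewrite /= /c; lra.
    exact: (open_comp (fun z _ => cmod_peval_continuous p z) (@open_gt _ c)).
  move=> [w' L] [/= cw' Lc] /(_ p) pL.
  by have := lt_trans (le_lt_trans pL Lc) cw'; rewrite ltxx.
have LB : \forall L \near hnbhs K, sval L `<=` [set z | maxdist z 0 < r + 1].
  by apply: hnbhs_subset_open; [exact: open_maxdist_lt | move=> z /Kr /= ?; lra].
near=> L; have [LDL LBL] : D `<=` ~` pchull (sval L) /\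
    sval L `<=` [set z | maxdist z 0 < r + 1] by split; near: L.
move=> w Lw; apply: contrapT => Vw; apply: (LDL w _ Lw); split => //.
apply: (pchull_subset_polydisc (proj2 (svalP L))) Lw.
by move=> z /LBL /ltW /maxdist_le_polydisc.
Unshelve. all: by end_near.
Qed.

Lemma hopen_pchull_subset V : open V -> hopen [set K | pchull (sval K) `<=` V].
Proof. by move=> Vo K /= KV; exact: pchull_upper_semicontinuous. Qed.

End hull_semicontinuity.

Section rational_approximation.
Context {R : realType} {n : nat}.
Local Notation Cn := (Cn R n).
Implicit Types (D : seq Cn) (s : R) (A B : set Cn).

(* With rational data these sets form a countable base of the Hausdorff topology. *)
Definition close_seq D s A :=
  A `<=` \bigcup_(x in [set` D]) [set z | maxdist z x < s] /\
  forall x, x \in D -> exists2 a, A a & maxdist a x < s.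

Lemma close_seq_near {D s A B} : close_seq D s A -> close_seq D s B ->
  forall a, A a -> exists2 b, B b & Defs.edist a b <= n%:R * (s + s).
Proof.
move=> [AD _] [_ DB] a /AD[x /= xD ax]; have [b Bb bx] := DB x xD.
exists b => //; apply: le_trans (edist_le_maxdist _ _) _.
rewrite ler_wpM2l // ltW //; apply: le_lt_trans (maxdist_triangle a x b) _.
by rewrite maxdistC in bx; exact: ltrD.
Qed.

Lemma hausdorff_close_seq {D s A B} : A !=set0 -> B !=set0 ->
  close_seq D s A -> close_seq D s B -> hausdorff A B <= n%:R * (s + s).
Proof.
by move=> A0 B0 AD BD; apply: hausdorff_le => //; [exact: close_seq_near AD BD|
  exact: close_seq_near BD AD].
Qed.

Definition ratC (q : rat * rat) : R[i] := ratr q.1 +i* ratr q.2.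

Definition rat_point (g : {ffun 'I_n -> rat * rat}) : Cn := \row_i ratC (g i).

Lemma ratC_dense (c : R[i]) {e} : 0 < e -> exists q, cmod (c - ratC q) < e.
Proof.
move=> e0; case: c => x y.
have [qx] : exists q, ratr q \in `]x - e / 2, x + e / 2[%R.
  by apply: rat_in_itvoo; lra.
have [qy] : exists q, ratr q \in `]y - e / 2, y + e / 2[%R.
  by apply: rat_in_itvoo; lra.
rewrite !in_itv /= => /andP[qy1 qy2] /andP[qx1 qx2]; exists (qx, qy).
apply: le_lt_trans (cmod_le_Re_Im (x - ratr qx) (y - ratr qy)) _.
have : `|x - ratr qx| < e / 2 by rewrite ltr_norml; apply/andP; split; lra.
have : `|y - ratr qy| < e / 2 by rewrite ltr_norml; apply/andP; split; lra.
lra.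
Qed.

Lemma rat_point_dense (z : Cn) {e} : 0 < e -> exists g, maxdist z (rat_point g) < e.
Proof.
move=> e0; have [g zg] := choice (fun i => ratC_dense (z ord0 i) e0).
by exists [ffun i => g i]; apply/maxdist_ltP => // i; rewrite mxE ffunE.
Qed.

Lemma compact_close_seq_rat {A s} : compact A -> 0 < s ->
  exists G : seq {ffun 'I_n -> rat * rat}, close_seq (map rat_point G) s A.
Proof.
rewrite compact_cover => Ac s0; have s20 : 0 < s / 2 by rewrite divr_gt0.
have [g ag] := choice (fun a => rat_point_dense a s20).
have AA : A `<=` cover A (fun a => [set z | maxdist z a < s / 2]).
  by move=> a Aa; exists a => //=; rewrite maxdistxx.
have [F FA AF] := Ac _ A _ (fun a _ => open_maxdist_lt a _) AA.
exists [seq g a | a <- finmap.enum_fset F]; rewrite -map_comp; split.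
  move=> z /AF[a aF /= za]; exists (rat_point (g a)); first exact: map_f.
  by apply: le_lt_trans (maxdist_triangle z a _) _; have := ag a; lra.
move=> _ /mapP[a aF ->]; exists a; first exact: set_mem (FA a aF).
by have := ag a; lra.
Qed.

End rational_approximation.

Section hull_measurable.
Context {R : realType} {n : nat}.
Local Notation Cn := (Cn R n).
Local Notation Kprime := (Kprime R n).

Definition Kprime0 : Kprime.
Proof. by exists [set 0]; split; [exact: compact_set1 | exists 0]. Defined.

(* [g_sigma_algebraType] needs a pointed carrier. *)
HB.instance Definition _ := gen_eqMixin Kprime.
HB.instance Definition _ := gen_choiceMixin Kprime.
HB.instance Definition _ := isPointed.Build Kprime Kprime0.

Local Notation Kborel := (g_sigma_algebraType [set U : set Kprime | hopen U]).
Implicit Types (V : set Cn) (D : seq Cn) (s : R).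

Lemma measurable_pchull_subset_open V : open V ->
  measurable [set K : Kborel | pchull (sval K) `<=` V].
Proof. by move=> Vo; apply: sub_sigma_algebra; exact: hopen_pchull_subset. Qed.

Lemma measurable_pchull_subset_ge (h : Cn -> R) c : continuous h ->
  measurable [set K : Kborel | pchull (sval K) `<=` [set z | c <= h z]].
Proof.
move=> hc; have -> : [set K : Kborel | pchull (sval K) `<=` [set z | c <= h z]] =
    \bigcap_m [set K : Kborel | pchull (sval K) `<=` [set z | c - m.+1%:R^-1 < h z]].
  apply/seteqP; split => [K Kc m _ z /Kc /=|K Kc z Kz /=].
    by apply: lt_le_trans; rewrite ltrBlDr ltrDl invr_gt0.
  rewrite leNgt; apply/negP => /ltr_add_invr[m].
  by rewrite -ltrBrDr ltNge (ltW (Kc m I z Kz)).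
apply: bigcapT_measurable => m; apply: measurable_pchull_subset_open.
exact: (open_comp (fun z _ => hc z) (@open_gt _ _)).
Qed.

Lemma measurable_close_seq D s :
  measurable [set K : Kborel | close_seq D s (pchull (sval K))].
Proof.
have -> : [set K : Kborel | close_seq D s (pchull (sval K))] =
    [set K : Kborel | pchull (sval K) `<=`
                      \bigcup_(x in [set` D]) [set z | maxdist z x < s]]
    `&` \bigcap_(x in [set` D])
          ~` [set K : Kborel | pchull (sval K) `<=` [set z | s <= maxdist z x]].
  apply/seteqP; split => K [KD DK]; split => // x xD.
    by have [z Kz zx] := DK x xD; move=> /(_ z Kz) /=; rewrite leNgt zx.
  apply: contrapT => nDK; apply: (DK x xD) => z Kz.
  by rewrite /= leNgt; apply/negP => zx; apply: nDK; exists z.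
apply: measurableI.
  apply: measurable_pchull_subset_open.
  by apply: bigcup_open => x _; exact: open_maxdist_lt.
apply: fin_bigcap_measurable; first exact: finite_seq.
move=> x _; apply: measurableC.
exact: measurable_pchull_subset_ge (maxdist_continuous x).
Qed.

Lemma measurable_hull_map_preimage U :
  hopen U -> measurable (hull_map @^-1` U : set Kborel).
Proof.
move=> Uo; pose basic (j : seq {ffun 'I_n -> rat * rat} * rat) :=
  [set L : Kprime | close_seq (map rat_point j.1) (ratr j.2) (sval L)].
have -> : hull_map @^-1` U = \bigcup_j
    (if pselect (basic j `<=` U) then hull_map @^-1` basic j else set0).
  apply/seteqP; split => [K /Uo[e e0 KU]|K [j _]]; last first.
    by case: (pselect (basic j `<=` U)) => // jU /jU.
  have [Kc K0] := svalP (hull_map K).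
  have [q] : exists q, ratr q \in `]0, e / (n.*2.+1)%:R[%R.
    by apply: rat_in_itvoo; rewrite divr_gt0.
  rewrite in_itv /= => /andP[q0 qe]; have [G KG] := compact_close_seq_rat Kc q0.
  exists (G, q) => //; case: (pselect (basic (G, q) `<=` U)) => [GU | []].
    exact: KG.
  move=> L LG; apply: KU.
  apply: le_lt_trans (hausdorff_close_seq K0 (proj2 (svalP L)) KG LG) _.
  have : 0 <= n%:R :> R by [].
  by move: qe; rewrite ltr_pdivlMr // -addn1 -muln2 natrD natrM; nra.
apply: countable_bigcupT_measurable => [|j]; first exact: countableP.
case: (pselect (basic j `<=` U)) => [jU|njU]; last exact: measurable0.
rewrite /basic; have := measurable_close_seq (map rat_point j.1) (ratr j.2).
by congr measurable; apply/seteqP; split => K /=; rewrite hull_mapE.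
Qed.

Lemma measurable_hull_map :
  measurable_fun [set: Kborel] (hull_map : Kborel -> Kborel).
Proof.
apply: (measurability [set U : set Kborel | hopen U]) => // _ [U Uo <-].
by rewrite setTI; exact: measurable_hull_map_preimage.
Qed.

End hull_measurable.

Theorem corollary6p14 (R : realType) (n : nat) :
  exists f : Kprime R n -> Kprime R n,
    (forall K, proj1_sig (f K) = pchull (proj1_sig K)) /\
    (forall B : set (Kprime R n), hborel B -> hborel (f @^-1` B)).
Proof.
exists hull_map; split => [|B B_borel]; first exact: hull_mapE.
by rewrite -[_ @^-1` _]setTI; exact: (measurable_hull_map measurableT).
Qed.
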